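(* Let $\pi_1\in\mathcal{T}_k$ and $\pi_2\in\mathcal{T}_\ell$ be two-stack sortable permutations. Then $D(C_1(\pi_1,\pi_2))=(\pi_1,\pi_2)$, and $D(C_2(\pi_1,\pi_2,i))=(\pi_1,\pi_2)$ for every $1\le i\le\operatorname{slmax}(\pi_2)$.
   Context: For a finite sequence $A$ of distinct integers, the stack-sorting operator $\mathcal{S}$ is defined by $\mathcal{S}(\epsilon)=\epsilon$ for the empty sequence and, if $A$ is non-empty with largest element $m$, writing $A=A_L\cdot(m)\cdot A_R$ (concatenation), $\mathcal{S}(A)=\mathcal{S}(A_L)\cdot\mathcal{S}(A_R)\cdot(m)$. For $n\ge1$, $\mathcal{T}_n$ is the set of two-stack sortable permutations $\sigma\in\mathfrak{S}_n$, i.e. with $\mathcal{S}(\mathcal{S}(\sigma))$ the identity. For a sequence $A$ of distinct integers, $P(A)$ is the permutation with the same relative order as $A$. For a sequence $\tau$: $\tau^{+k}$ adds $k$ to each element; for $k_1<k_2$, $\tau^{+(k_1,m,k_2)}$ adds $k_1$ to elements strictly smaller than $m$ and $k_2$ to the others. $\operatorname{slmax}(\sigma)$ is the number of left-to-right maxima of $\mathcal{S}(\sigma)$; if $a_1,\dots,a_t$ are their values in order, define $C_1(\pi_1,\pi_2)=\pi_1\cdot(k+\ell+1)\cdot\pi_2^{+k}$ and $C_2(\pi_1,\pi_2,i)=\pi_1^{+(0,k,a_i)}\cdot(k+\ell+1)\cdot\pi_2^{+(k-1,a_i+1,k)}$ (with $a_i$ taken from $\mathcal{S}(\pi_2)$).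 For a permutation $\pi$ of length $n\ge1$ written $\pi=\pi_\ell\cdot(n)\cdot\pi_r$ (parts before and after the entry $n$), $D(\pi)=(P(\pi_\ell),P(\pi_r))$. *)

From mathcomp Require Import all_boot.
Set Implicit Arguments. Unset Strict Implicit. Unset Printing Implicit Defensive.

(* sigma is a permutation in S_n (one-line notation, values 1..n) *)
Definition is_perm (n : nat) (s : seq nat) : bool := perm_eq s (iota 1 n).

(* Stack-sorting operator S, defined as in the paper:
   S(eps) = eps, S(A_L . m . A_R) = S(A_L) . S(A_R) . m with m the largest entry.
   Fuel = size s suffices since both parts are strictly shorter. *)
Fixpoint ssort_aux (fuel : nat) (s : seq nat) : seq nat :=
  match fuel with
  | 0 => [::]
  | f.+1 =>
    if s is [::] then [::] else
    let m := \max_(x <- s) x in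
    let i := index m s in
    ssort_aux f (take i s) ++ ssort_aux f (drop i.+1 s) ++ [:: m]
  end.
Definition stack_sort (s : seq nat) : seq nat := ssort_aux (size s) s.

Definition two_stack_sortable (n : nat) (s : seq nat) : bool :=
  is_perm n s && (stack_sort (stack_sort s) == iota 1 n).

Definition std (s : seq nat) : seq nat :=
  [seq (count (fun y => y < x) s).+1 | x <- s].

Definition shift (k : nat) (t : seq nat) : seq nat := [seq x + k | x <- t].
Definition shift3 (k1 m k2 : nat) (t : seq nat) : seq nat :=
  [seq if x < m then x + k1 else x + k2 | x <- t].

(* values of the left-to-right maxima of a sequence (of positive entries), in order *)
Fixpoint lrmax_aux (cur : nat) (s : seq nat) : seq nat :=
  match s with
  | [::] => [::]
  | x :: t => if cur < x then x :: lrmax_aux x t else lrmax_aux cur t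
  end.
Definition lrmax (s : seq nat) : seq nat := lrmax_aux 0 s.

Definition slmax (s : seq nat) : nat := size (lrmax (stack_sort s)).
(* a_i (1-based) for S(sigma) *)
Definition slmax_val (s : seq nat) (i : nat) : nat := nth 0 (lrmax (stack_sort s)) i.-1.

Definition C1 (k l : nat) (p1 p2 : seq nat) : seq nat :=
  p1 ++ [:: k + l + 1] ++ shift k p2.
Definition C2 (k l : nat) (p1 p2 : seq nat) (i : nat) : seq nat :=
  let a := slmax_val p2 i in
  shift3 0 k a p1 ++ [:: k + l + 1] ++ shift3 k.-1 a.+1 k p2.

Definition D (p : seq nat) : seq nat * seq nat :=
  let n := size p in
  let i := index n p in
  (std (take i p), std (drop i.+1 p)).

From mathcomp Require Import all_boot.
From mathcomp Require Import zify.

Set Implicit Arguments.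
Unset Strict Implicit.
Unset Printing Implicit Defensive.

(* In both constructions the maximum k + l + 1 splits the word into a strictly
   increasing relabelling of pi1 followed by one of pi2, and standardization
   undoes strictly increasing relabellings and fixes permutations.  For C2 the
   left part stays below the maximum because a_i is an entry of S(pi2), hence
   at most l. *)

Lemma is_perm_size n s : is_perm n s -> size s = n.
Proof. by move/perm_size->; rewrite size_iota. Qed.

Lemma is_perm_mem n s x : is_perm n s -> (x \in s) = (0 < x <= n).
Proof. by move/perm_mem->; rewrite mem_iota; lia. Qed.

Lemma count_ltn_iota x m n : count (fun y => y < x) (iota m n) = minn (x - m) n.
Proof. by elim: n m => [|n IHn] m /=; [lia | rewrite IHn; case: ltnP => /=; lia]. Qed.

Lemma std_is_perm n s : is_perm n s -> std s = s.
Proof.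
move=> sP; apply: map_id_in => x; rewrite (is_perm_mem x sP) => x_range.
by rewrite (permP sP) count_ltn_iota; lia.
Qed.

Lemma std_map_mono f s : {mono f : x y / x < y} -> std (map f s) = std s.
Proof.
move=> f_mono; rewrite /std -map_comp; apply: eq_map => x /=.
by rewrite count_map; congr S; apply: eq_count => y /=; rewrite f_mono.
Qed.

Lemma std_shift k s : std (shift k s) = std s.
Proof. by apply: std_map_mono => x y; rewrite ltn_add2r. Qed.

Lemma std_shift3 k1 m k2 s : k1 <= k2 -> std (shift3 k1 m k2 s) = std s.
Proof.
move=> le_k12; apply: std_map_mono => x y.
by case: (ltnP x m); case: (ltnP y m) => *; apply/idP/idP; lia.
Qed.

Lemma D_cat_max A B n :
  all (fun x => x < n) A -> size A + (size B).+1 = n -> D (A ++ n :: B) = (std A, std B).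
Proof.
move=> A_lt sizeAB; rewrite /D size_cat /= sizeAB.
have nA : n \notin A by apply/negP => /(allP A_lt); rewrite ltnn.
rewrite index_cat (negbTE nA) /= eqxx addn0 take_size_cat //.
by rewrite drop_cat ltnNge leqnSn /= subSn // subnn drop1.
Qed.

Lemma bigmax_seq_mem (s : seq nat) : s != [::] -> \max_(x <- s) x \in s.
Proof.
elim: s => // y [|z s] IHs _; first by rewrite big_seq1 mem_seq1.
by rewrite big_cons; case: leqP => _; rewrite ?mem_head // in_cons IHs ?orbT.
Qed.

Lemma mem_ssort_aux f s : {subset ssort_aux f s <= s}.
Proof.
elim: f s => [|f IHf] [|y s] //= x.
rewrite !mem_cat => /or3P [/IHf/mem_take // | /IHf/mem_drop xs | ].
  by rewrite in_cons xs orbT.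
by rewrite mem_seq1 => /eqP->; apply: bigmax_seq_mem.
Qed.

Lemma mem_stack_sort s : {subset stack_sort s <= s}.
Proof. exact: mem_ssort_aux. Qed.

Lemma mem_lrmax_aux cur s : {subset lrmax_aux cur s <= s}.
Proof.
elim: s cur => [|y s IHs] cur //= x; case: ifP => _; rewrite ?inE.
- by case/orP => [->|/IHs->]; rewrite ?orbT.
- by move/IHs->; rewrite orbT.
Qed.

Lemma mem_slmax_val s i : 0 < i <= slmax s -> slmax_val s i \in s.
Proof.
case/andP=> i_gt0 le_i; apply/mem_stack_sort/(@mem_lrmax_aux 0)/mem_nth.
by rewrite prednK.
Qed.

Theorem proposition7 (k l : nat) (p1 p2 : seq nat) :
  0 < k -> 0 < l ->
  two_stack_sortable k p1 -> two_stack_sortable l p2 ->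
  D (C1 k l p1 p2) = (p1, p2) /\
  (forall i : nat, 1 <= i <= slmax p2 -> D (C2 k l p1 p2 i) = (p1, p2)).
Proof.
move=> _ _ /andP[p1P _] /andP[p2P _].
have size_p1 := is_perm_size p1P; have size_p2 := is_perm_size p2P.
have p1_range x : x \in p1 -> 0 < x <= k by rewrite (is_perm_mem x p1P).
split=> [|i i_range].
  rewrite /C1 /= D_cat_max ?std_shift ?(std_is_perm p1P) ?(std_is_perm p2P) //.
    by apply/allP => x /p1_range; lia.
  by rewrite size_map; lia.
rewrite /C2 /=; set a := slmax_val p2 i.
have le_a : a <= l by move: (mem_slmax_val i_range); rewrite (is_perm_mem a p2P); lia.
rewrite D_cat_max ?std_shift3 ?leq_pred ?(std_is_perm p1P) ?(std_is_perm p2P) //.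
  by rewrite all_map; apply/allP => x /p1_range /=; case: ifP; lia.
by rewrite !size_map; lia.
Qed.
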